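(* Let $n\ge2$ and let $I$ be an ideal of $\Phi_{A_{n-1}}$ such that $I^c$ is full. Let $A^{(1)}|\dots|A^{(r)}$ be the partition of $[n]$ in accordance with $I$. Then for $1\le x<y\le n$, one has $e_x-e_y\in I^c$ if and only if either $x$ and $y$ lie in the same block $A^{(u)}$, or $x\in A^{(u)}$, $y\in A^{(v)}$ with $u\ne v$ and $s_I(A^{(u)})\cap s_I(A^{(v)})\neq\emptyset$. Equivalently, identifying $e_x-e_y$ with the pair $\{x,y\}$, $$I^c=\bigsqcup_{u=1}^r\Big(\binom{A^{(u)}}{2}\ \sqcup\ \bigsqcup_{v\in R^{(u)}}\big\{\{x,y\}: x\in A^{(u)},\,y\in A^{(v)}\big\}\Big),$$ where $R^{(u)}=\{v\in\{u+1,\dots,r\}: s_I(A^{(u)})\cap s_I(A^{(v)})\ne\emptyset\}$.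
   Context: $\Phi^+_{A_{n-1}}=\{e_i-e_j:1\le i<j\le n\}$ with simple roots $e_i-e_{i+1}$, $i\in[n-1]$. The partial order $\preceq$ on $\Phi^+_{A_{n-1}}$: $u\preceq v$ iff $v-u$ is a nonnegative integer combination of simple roots; concretely $e_i-e_j\preceq e_{i'}-e_{j'}$ iff $i'\le i$ and $j\le j'$. An ideal is a subset $I\subseteq\Phi^+_{A_{n-1}}$ with $u\in I$, $u\preceq v\Rightarrow v\in I$; $I^c=\Phi^+_{A_{n-1}}\setminus I$. $I^c$ is full if it contains every simple root $e_i-e_{i+1}$. Let $e_{i_1}-e_{j_1},\dots,e_{i_k}-e_{j_k}$ be the maximal elements of $I^c$ (the generators). The signature of $u\in[n]$ is $s_I(u)=\{l\in[k]: i_l\le u\le j_l\}$. The partition of $[n]$ in accordance with $I$ is the partition $A^{(1)}|\dots|A^{(r)}$ into the maximal nonempty subsets on which $s_I$ is constant, indexed so that $\min A^{(1)}<\dots<\min A^{(r)}$; $s_I(A^{(u)})$ denotes the common value of $s_I$ on $A^{(u)}$. *)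

From mathcomp Require Import all_boot.
Set Implicit Arguments. Unset Strict Implicit. Unset Printing Implicit Defensive.

(* e_i - e_j, encoded as (i, j), is a positive root of A_{n-1} *)
Definition is_root (n : nat) (r : nat * nat) : bool :=
  (1 <= r.1) && (r.1 < r.2) && (r.2 <= n).

(* e_i - e_j <= e_i' - e_j'  iff  i' <= i and j <= j' *)
Definition rprec (u v : nat * nat) : bool := (v.1 <= u.1) && (u.2 <= v.2).

Definition is_ideal (n : nat) (I : pred (nat * nat)) : Prop :=
  (forall u, I u -> is_root n u) /\
  (forall u v, is_root n u -> is_root n v -> I u -> rprec u v -> I v).

Definition compl (n : nat) (I : pred (nat * nat)) (u : nat * nat) : bool :=
  is_root n u && ~~ I u.

Definition full (n : nat) (I : pred (nat * nat)) : Prop :=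
  forall i, 1 <= i -> i < n -> compl n I (i, i.+1).

Definition generator (n : nat) (I : pred (nat * nat)) (g : nat * nat) : Prop :=
  compl n I g /\ (forall v, compl n I v -> rprec g v -> v = g).

(* g belongs to the signature s_I(u), i.e. i_g <= u <= j_g *)
Definition in_sig (n : nat) (I : pred (nat * nat)) (u : nat) (g : nat * nat) : Prop :=
  generator n I g /\ g.1 <= u <= g.2.

Definition same_sig (n : nat) (I : pred (nat * nat)) (a b : nat) : Prop :=
  forall g, in_sig n I a g <-> in_sig n I b g.

Definition sig_const_on (n : nat) (I : pred (nat * nat)) (B : pred nat) : Prop :=
  (forall z, B z -> 1 <= z <= n) /\ (forall a b, B a -> B b -> same_sig n I a b).

(* B is a block of the partition of [n] in accordance with I: a maximal
   nonempty subset of [n] on which s_I is constant *)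
Definition is_block (n : nat) (I : pred (nat * nat)) (B : pred nat) : Prop :=
  sig_const_on n I B /\ (exists z, B z) /\
  (forall B', sig_const_on n I B' -> (forall z, B z -> B' z) -> forall z, B' z -> B z).

(** A root e_x - e_y (x < y) lies in I^c exactly when it lies below a generator
    e_i - e_j of I^c, i.e. when i <= x < y <= j: I^c is downward closed since I
    is an upper set, and every element of I^c lies below a maximal one. So
    e_x - e_y is in I^c iff s_I(x) and s_I(y) meet. If x and y are in one block
    they have the same signature, which is nonempty because I^c is full; if
    they are in different blocks, meeting signatures is the stated condition. *)
From Stdlib Require Import Classical ClassicalEpsilon.
From mathcomp Require Import all_boot zify.
Set Implicit Arguments. Unset Strict Implicit. Unset Printing Implicit Defensive.

Definition asbool (P : Prop) : bool :=
  if excluded_middle_informative P then true else false.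

Lemma asboolP (P : Prop) : reflect P (asbool P).
Proof. by rewrite /asbool; case: excluded_middle_informative => ?; constructor. Qed.

Lemma rprec_refl u : rprec u u.
Proof. by rewrite /rprec !leqnn. Qed.

Lemma rprec_trans u v w : rprec u v -> rprec v w -> rprec u w.
Proof. by rewrite /rprec => /andP[? ?] /andP[? ?]; apply/andP; lia. Qed.

Lemma rprec_wider u v : u.1 <= u.2 -> rprec u v -> v <> u ->
  u.2 - u.1 < v.2 - v.1.
Proof.
case: u v => [a b] [c d] /=; rewrite /rprec /= => hab /andP[hca hbd] hne.
have [hc | hc] := ltnP c a; first lia.
have [hd | hd] := ltnP b d; first lia.
by case: hne; congr pair; lia.
Qed.

Lemma compl_root n I v : compl n I v -> is_root n v.
Proof. by case/andP. Qed.

Section Complement.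

Variables (n : nat) (I : pred (nat * nat)).

Lemma compl_below_generator v :
  compl n I v -> exists2 g, generator n I g & rprec v g.
Proof.
(* Induction on n minus the width v.2 - v.1, which a non-maximal step increases. *)
have [k hk] : exists k, n - (v.2 - v.1) <= k by exists (n - (v.2 - v.1)).
elim: k v hk => [|k IHk] v hk Hv; have /andP[/andP[h1 h12] h2] := compl_root Hv.
  lia.
have [Hg | Hng] := classic (generator n I v).
  by exists v; last exact: rprec_refl.
have [w [Hw [Hvw Hwv]]] : exists w, compl n I w /\ rprec v w /\ w <> v.
  apply: NNPP => Hnw; apply: Hng; split=> // w Hw Hvw.
  by apply: NNPP => Hwv; apply: Hnw; exists w.
have Hwide := rprec_wider (ltnW h12) Hvw Hwv.
have [g Hg Hwg] := IHk w ltac:(lia) Hw.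
by exists g; last exact: rprec_trans Hwg.
Qed.

Hypothesis ideal_I : is_ideal n I.

Lemma compl_below_compl v g :
  is_root n v -> compl n I g -> rprec v g -> compl n I v.
Proof.
move=> Hv Hg Hvg; rewrite /compl Hv /=; apply/negP => HIv.
have HIg := ideal_I.2 _ _ Hv (compl_root Hg) HIv Hvg.
by move: Hg; rewrite /compl HIg andbF.
Qed.

Lemma compl_iff_common_sig x y : is_root n (x, y) ->
  compl n I (x, y) <-> exists g, in_sig n I x g /\ in_sig n I y g.
Proof.
move=> Hxy; have /andP[/andP[/= hx hxy] hy] := Hxy; split.
- move=> /compl_below_generator[g Hg]; rewrite /rprec /= => /andP[h1 h2].
  by exists g; split; split=> //; apply/andP; lia.
- move=> [g [[Hg /andP[h1 _]] [_ /andP[_ h2]]]].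
  by apply: compl_below_compl Hxy Hg.1 _; rewrite /rprec h1 h2.
Qed.

End Complement.

Lemma full_sig_nonempty n I x : full n I -> 1 <= x -> x < n ->
  exists g, in_sig n I x g.
Proof.
move=> Hfull hx hxn.
have [g Hg] := compl_below_generator (Hfull x hx hxn).
by rewrite /rprec /= => /andP[h1 h2]; exists g; split=> //; apply/andP; lia.
Qed.

Lemma same_sig_sym n I a b : same_sig n I a b -> same_sig n I b a.
Proof. by move=> H g; split=> /H. Qed.

Lemma same_sig_trans n I a b c :
  same_sig n I a b -> same_sig n I b c -> same_sig n I a c.
Proof. by move=> H1 H2 g; split=> [/H1/H2|/H2/H1]. Qed.

Definition sig_class n I z : pred nat :=
  fun w => asbool ((1 <= w <= n) /\ same_sig n I w z).

Lemma sig_classP n I z w :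
  reflect ((1 <= w <= n) /\ same_sig n I w z) (sig_class n I z w).
Proof. exact: asboolP. Qed.

Lemma sig_class_refl n I z : 1 <= z <= n -> sig_class n I z z.
Proof. by move=> hz; apply/sig_classP. Qed.

Lemma sig_class_block n I z : 1 <= z <= n -> is_block n I (sig_class n I z).
Proof.
move=> hz; split; [split | split].
- by move=> w /sig_classP[].
- move=> a b /sig_classP[_ Ha] /sig_classP[_ Hb].
  exact: same_sig_trans Ha (same_sig_sym Hb).
- by exists z; exact: sig_class_refl.
- move=> B [HBn HBsig] HsubB w Bw; apply/sig_classP; split; first exact: HBn.
  by apply: HBsig Bw (HsubB _ _); apply: sig_class_refl.
Qed.

Theorem mainTheorem10 (n : nat) (I : pred (nat * nat)) :
  2 <= n -> is_ideal n I -> full n I ->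
  forall x y, 1 <= x -> x < y -> y <= n ->
  (compl n I (x, y) <->
     ((exists A, is_block n I A /\ A x /\ A y) \/
      (exists A B, is_block n I A /\ is_block n I B /\ A x /\ B y /\
         ~ (A =1 B) /\ (exists g, in_sig n I x g /\ in_sig n I y g)))).
Proof.
move=> _ Hid Hfull x y hx hxy hy.
have Hxy : is_root n (x, y) by rewrite /is_root /= hx hxy hy.
have hxn : 1 <= x <= n by apply/andP; lia.
have hyn : 1 <= y <= n by apply/andP; lia.
rewrite (compl_iff_common_sig Hid Hxy); split.
- move=> Hcommon; have [Hs | Hns] := classic (same_sig n I x y).
    left; exists (sig_class n I x); split; first exact: sig_class_block.
    by split; [exact: sig_class_refl | apply/sig_classP; split; last exact: same_sig_sym].
  right; exists (sig_class n I x), (sig_class n I y).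
  split; first exact: sig_class_block.
  split; first exact: sig_class_block.
  split; first exact: sig_class_refl.
  split; first exact: sig_class_refl.
  split=> // Heq; apply: Hns; apply: same_sig_sym.
  by move: (sig_class_refl I hyn); rewrite -Heq => /sig_classP[].
- case=> [[A [[[_ HAsig] _] [Ax Ay]]] | [A [B [_ [_ [_ [_ [_ Hcommon]]]]]]]] //.
  have [g Hgx] := full_sig_nonempty Hfull hx (leq_trans hxy hy).
  by exists g; split=> //; apply/(HAsig x y Ax Ay).
Qed.
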